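(* Let $(X,\tau)$ be a Hausdorff extended locally convex space and let $x\in X$ with $x\neq 0_X$. Then there exists a $\tau$-continuous linear functional $f$ on $X$ with $f(x)\neq0$.
   Context: An extended seminorm on a vector space $X$ over $\mathbb{R}$ or $\mathbb{C}$ is a map $\rho:X\to[0,\infty]$ with $\rho(\alpha x)=|\alpha|\rho(x)$ and $\rho(x+y)\le\rho(x)+\rho(y)$. An extended locally convex space $(X,\tau)$ is a vector space with the topology induced by a family $\{\rho_i\}$ of extended seminorms (neighborhood base at $x_0$: $\{x:\max_{i\in J}\rho_i(x-x_0)<\varepsilon\}$, $J$ finite, $\varepsilon>0$). *)

From Stdlib Require List.
From HB Require Import structures.
From mathcomp Require Import all_boot all_order all_algebra.
From mathcomp Require Import constructive_ereal.
From mathcomp Require Import complex.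
Set Implicit Arguments. Unset Strict Implicit. Unset Printing Implicit Defensive.
Import Order.TTheory GRing.Theory Num.Theory.
Local Open Scope ring_scope.
Local Open Scope ereal_scope.

(* Scalars K : a numFieldType (instantiated with a real field R or with
   the complex numbers R[i]); X : a K-vector space. *)

Definition ext_seminorm (K : numFieldType) (X : lmodType K) (rho : X -> \bar K) :=
  [/\ forall x, 0 <= rho x,
      forall (a : K) (x : X), rho (a *: x) = (`|a|)%:E * rho x &
      forall x y, rho (x + y)%R <= rho x + rho y].

Definition ebasic_nbhd (K : numFieldType) (X : lmodType K) (I : Type)
    (rho : I -> X -> \bar K) (J : seq I) (eps : K) (x0 : X) (y : X) : Prop :=
  forall i, List.In i J -> rho i (y - x0)%R < eps%:E.

Definition elc_open (K : numFieldType) (X : lmodType K) (I : Type)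
    (rho : I -> X -> \bar K) (U : X -> Prop) : Prop :=
  forall x0, U x0 -> exists (J : seq I) (eps : K), (0 < eps)%R /\
    forall y, ebasic_nbhd rho J eps x0 y -> U y.

Definition elc_hausdorff (K : numFieldType) (X : lmodType K) (I : Type)
    (rho : I -> X -> \bar K) : Prop :=
  forall x y : X, x <> y -> exists U V : X -> Prop,
    [/\ elc_open rho U, elc_open rho V, U x, V y &
        forall z, ~ (U z /\ V z)].

Definition scalar_open (K : numFieldType) (W : K -> Prop) : Prop :=
  forall z0, W z0 -> exists eps : K, (0 < eps)%R /\
    forall z, (`|z - z0| < eps)%R -> W z.

Definition linear_functional (K : numFieldType) (X : lmodType K) (f : X -> K) :=
  forall (a : K) (x y : X), (f (a *: x + y) = a * f x + f y)%R.

Definition elc_continuous (K : numFieldType) (X : lmodType K) (I : Type)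
    (rho : I -> X -> \bar K) (f : X -> K) : Prop :=
  forall W, scalar_open W -> elc_open rho (fun x => W (f x)).

Definition cor3p10_over (K : numFieldType) : Prop :=
  forall (X : lmodType K) (I : Type) (rho : I -> X -> \bar K),
    (forall i, ext_seminorm (rho i)) ->
    elc_hausdorff rho ->
    forall x : X, x <> 0%R ->
    exists f : X -> K, [/\ linear_functional f, elc_continuous rho f & f x <> 0%R].

(* Hausdorffness gives an index i with rho_i x > 0; pick 0 < c <= rho_i x.  A
   Hahn-Banach argument extends t x |-> t c to a linear functional g with
   |g| <= rho_i, and such a g is tau-continuous.  As rho_i may take the value
   +oo, the extension is done by hand, by Zorn's lemma on graphs of dominated
   linear functionals: in the one-dimensional step, points at infinite
   rho_i-distance impose no constraint on the new value.  Over C, apply this to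
   X viewed as a real space with the seminorm Re o rho_i, and complexify the
   resulting g as f v = g v - i g (i v). *)

From HB Require Import structures.
From mathcomp Require Import all_boot all_order all_algebra.
From mathcomp Require Import constructive_ereal reals complex.
From mathcomp Require Import boolp classical_sets.
From mathcomp Require Import ring lra.
Set Implicit Arguments. Unset Strict Implicit. Unset Printing Implicit Defensive.
Import Order.TTheory GRing.Theory Num.Theory.
Local Open Scope ring_scope.
Local Open Scope classical_set_scope.

Section ExtSeminorm.
Variables (K : numFieldType) (X : lmodType K) (p : X -> \bar K).
Hypothesis p_seminorm : ext_seminorm p.

Lemma ext_seminorm0 : p 0 = 0%E.
Proof. by case: p_seminorm => _ pZ _; rewrite -(scale0r 0) pZ normr0 mul0e. Qed.

Lemma ext_seminormN x : p (- x) = p x.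
Proof. by case: p_seminorm => _ pZ _; rewrite -scaleN1r pZ normrN normr1 mul1e. Qed.

Lemma ext_seminormB x y : (p (x - y) <= p x + p y)%E.
Proof. by case: p_seminorm => _ _ pD; rewrite -(ext_seminormN y) pD. Qed.

Lemma ext_seminorm_gt0 x : p x <> 0%E -> (0 < p x)%E.
Proof. by case: p_seminorm => /(_ x) p_ge0 _ _ /eqP px_neq0; rewrite lt_def px_neq0. Qed.

End ExtSeminorm.

Section LinearFunctional.
Variables (K : numFieldType) (X : lmodType K) (f : X -> K).
Hypothesis f_lin : linear_functional f.

Lemma linear_functional0 : f 0 = 0.
Proof. by apply: (addrI (f 0)); rewrite addr0 -{1}[f 0]mul1r -f_lin scale1r addr0. Qed.

Lemma linear_functionalD x y : f (x + y) = f x + f y.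
Proof. by have := f_lin 1 x y; rewrite scale1r mul1r. Qed.

Lemma linear_functionalZ a x : f (a *: x) = a * f x.
Proof. by rewrite -[a *: x]addr0 f_lin linear_functional0 addr0. Qed.

Lemma linear_functionalB x y : f (x - y) = f x - f y.
Proof. by rewrite linear_functionalD -scaleN1r linear_functionalZ mulN1r. Qed.

End LinearFunctional.

Lemma ereal_gt0_lower_pos (R : realFieldType) (z : \bar R) :
  (0 < z)%E -> exists2 c : R, 0 < c & (c%:E <= z)%E.
Proof.
case: z => [r r_gt0| _|//]; last by exists 1; rewrite ?leey.
by exists r; rewrite -?lte_fin.
Qed.

Lemma exists_between (R : realType) (T : Type) (D : set T) (l u : T -> R) :
  (forall s t, D s -> D t -> l s <= u t) ->
  exists c, forall t, D t -> l t <= c <= u t.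
Proof.
move=> lu; have [[t0 Dt0]|D0] := pselect (D !=set0); last first.
  by exists 0 => t Dt; case: D0; exists t.
have lD0 : l @` D !=set0 by exists (l t0), t0.
exists (sup (l @` D)) => t Dt; apply/andP; split.
  apply: sup_upper_bound; last by exists t.
  by split => //; exists (u t0) => _ [s Ds <-]; exact: lu.
by apply: ge_sup => // _ [s Ds <-]; exact: lu.
Qed.

Section DominatedExtension.
Variables (R : realType) (V : lmodType R) (p : V -> \bar R).
Hypothesis p_seminorm : ext_seminorm p.

Definition linear_graph (G : set (V * R)) :=
  forall a u w, G u -> G w -> G (a *: u.1 + w.1, a * u.2 + w.2).
Definition functional_graph (G : set (V * R)) :=
  forall v a b, G (v, a) -> G (v, b) -> a = b.
Definition dominated_graph (G : set (V * R)) :=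
  forall v a, G (v, a) -> (`|a|%:E <= p v)%E.
Definition admissible_graph (G : set (V * R)) :=
  [/\ linear_graph G, functional_graph G & dominated_graph G].

Lemma linear_graphB G v a w b : linear_graph G ->
  G (v, a) -> G (w, b) -> G (v - w, a - b).
Proof.
move=> linG Gva Gwb; have := linG (-1) _ _ Gwb Gva.
by rewrite /= scaleN1r mulN1r addrC [- b + _]addrC.
Qed.

Lemma linear_graphZ G v b a : linear_graph G -> G (v, b) -> G (a *: v, a * b).
Proof.
move=> linG Gvb; have := linG a _ _ Gvb (linear_graphB linG Gvb Gvb).
by rewrite /= !subrr !addr0.
Qed.

Lemma admissible_bigcup (F : set (set (V * R))) :
  F `<=` admissible_graph -> total_on F subset ->
  admissible_graph (\bigcup_(G in F) G).
Proof.
move=> Fadm Ftot.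
have common u w : (\bigcup_(G in F) G) u -> (\bigcup_(G in F) G) w ->
    exists G, [/\ F G, admissible_graph G, G u & G w].
  move=> [G1 FG1 G1u] [G2 FG2 G2w].
  have [G12|G21] := Ftot _ _ FG1 FG2.
    by exists G2; split => //; [exact: Fadm | exact: G12].
  by exists G1; split => //; [exact: Fadm | exact: G21].
split.
- move=> a u w Fu Fw; have [G [FG [linG _ _] Gu Gw]] := common _ _ Fu Fw.
  by exists G => //; exact: linG.
- move=> v a b Fa Fb; have [G [_ [_ funG _] Ga Gb]] := common _ _ Fa Fb.
  exact: funG Ga Gb.
- move=> v a Fa; have [G [_ [_ _ domG] Ga _]] := common _ _ Fa Fa.
  exact: domG Ga.
Qed.

Lemma admissible_line x0 c0 : (`|c0|%:E <= p x0)%E ->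
  admissible_graph (range (fun t => (t *: x0, t * c0))).
Proof.
move=> c0_le; split.
- move=> a _ _ [t _ <-] [s _ <-] /=; exists (a * t + s) => //.
  by rewrite scalerDl scalerA; congr (_, _); ring.
- move=> v a b [t _ [<- <-]] [s _ [tsx0 <-]].
  have [->//|neq_ts] := eqVneq t s.
  have x00 : x0 = 0.
    apply: (scalerI (a := t - s)); first by rewrite subr_eq0.
    by rewrite scalerBl tsx0 subrr scaler0.
  move: c0_le; rewrite x00 (ext_seminorm0 p_seminorm) lee_fin normr_le0 => /eqP->.
  by rewrite !mulr0.
- move=> v a [t _ [<- <-]]; case: p_seminorm => _ pZ _.
  by rewrite pZ normrM EFinM lee_wpmul2l // lee_fin.
Qed.

Lemma dominated_extension_value G y : admissible_graph G ->
  exists c, forall m a, G (m, a) -> (`|a + c|%:E <= p (m + y))%E.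
Proof.
case=> linG _ domG.
pose D := [set z : V * R * R | G (z.1.1, z.1.2) /\ p (z.1.1 + y) = z.2%:E].
have [c between] : exists c, forall z, D z -> - z.1.2 - z.2 <= c <= z.2 - z.1.2.
  apply: exists_between => -[[m a] q] [[m' a'] q'] [/= Gma pq] [/= Gma' pq'] /=.
  suff : a' - a <= q + q' by lra.
  rewrite -lee_fin (EFinD q q') -pq -pq' addeC.
  apply: le_trans (ext_seminormB p_seminorm (m' + y) (m + y)).
  rewrite (_ : m' + y - (m + y) = m' - m); last by rewrite opprD addrACA subrr addr0.
  apply: le_trans (domG _ _ (linear_graphB linG Gma' Gma)).
  by rewrite lee_fin ler_norm.
exists c => m a Gma; case pmy: (p (m + y)) => [q| |]; last 2 first.
- exact: leey.
- by case: p_seminorm => /(_ (m + y)); rewrite pmy.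
have := between (m, a, q) (conj Gma pmy); rewrite lee_fin ler_norml /=.
by move=> /andP[? ?]; apply/andP; split; lra.
Qed.

Definition graph_extension (G : set (V * R)) (y : V) (c : R) : set (V * R) :=
  [set z | exists m a t, G (m, a) /\ z = (m + t *: y, a + t * c)].

Lemma sub_graph_extension G y c : G `<=` graph_extension G y c.
Proof. by move=> [m a] Gma; exists m, a, 0; rewrite scale0r mul0r !addr0. Qed.

Lemma linear_graph_extension G y c :
  linear_graph G -> linear_graph (graph_extension G y c).
Proof.
move=> linG b _ _ [m [a [t [Gma ->]]]] [m' [a' [t' [Gma' ->]]]] /=.
exists (b *: m + m'), (b * a + a'), (b * t + t'); split.
  exact: (linG b (m, a) (m', a')).
by rewrite scalerDr scalerA scalerDl addrACA; congr (_, _); ring.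
Qed.

Lemma functional_graph_extension G y c : linear_graph G -> functional_graph G ->
  ~ (exists a, G (y, a)) -> functional_graph (graph_extension G y c).
Proof.
move=> linG funG y_notin v _ _ [m [a [t [Gma [-> ->]]]]] [m' [a' [t' [Gma' [mt ->]]]]].
have [tt'|neq_tt'] := eqVneq t t'.
  by move: mt Gma'; rewrite -tt' => /addIr <- Gma'; rewrite (funG _ _ _ Gma Gma').
have tt'0 : t - t' != 0 by rewrite subr_eq0.
exfalso; apply: y_notin; exists ((t - t')^-1 * (a' - a)).
rewrite -[y](scalerK tt'0).
have -> : (t - t') *: y = m' - m.
  by rewrite scalerBl -(addKr m (t *: y)) mt addrA addrK addrC.
exact: linear_graphZ (linear_graphB linG Gma' Gma).
Qed.

Lemma dominated_graph_extension G y c : linear_graph G -> dominated_graph G ->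
  (forall m a, G (m, a) -> (`|a + c|%:E <= p (m + y))%E) ->
  dominated_graph (graph_extension G y c).
Proof.
move=> linG domG c_dom v _ [m [a [t [Gma [-> ->]]]]].
have [->|t0] := eqVneq t 0; first by rewrite scale0r mul0r !addr0; exact: domG.
case: p_seminorm => _ pZ _.
have -> : m + t *: y = t *: (t^-1 *: m + y) by rewrite scalerDr scalerA mulfV // scale1r.
have -> : a + t * c = t * (t^-1 * a + c) by rewrite mulrDr mulrA mulfV // mul1r.
rewrite pZ normrM EFinM lee_wpmul2l // ?lee_fin //.
exact: c_dom (linear_graphZ _ linG Gma).
Qed.

Lemma admissible_graph_extension G y : admissible_graph G -> G !=set0 ->
  ~ (exists a, G (y, a)) -> exists2 G', admissible_graph G' & G `<` G'.
Proof.
move=> [linG funG domG] [[m a] Gma] y_notin.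
have [c c_dom] := dominated_extension_value y (And3 linG funG domG).
exists (graph_extension G y c); first split.
- exact: linear_graph_extension.
- exact: functional_graph_extension.
- exact: dominated_graph_extension.
split; first exact: sub_graph_extension.
move=> /(_ (y, c)) Gext; apply: y_notin; exists c; apply: Gext.
exists 0, 0, 1; split; first by have := linear_graphB linG Gma Gma; rewrite !subrr.
by rewrite scale1r mul1r !add0r.
Qed.

Lemma exists_total_admissible_graph x0 c0 : (`|c0|%:E <= p x0)%E ->
  exists G, [/\ admissible_graph G, G (x0, c0) & forall v, exists a, G (v, a)].
Proof.
move=> c0_le.
(* [Zorn_bigcup] also covers the empty chain, whose union [set0] cannot contain the seed. *)
pose seeded G := admissible_graph G /\ (G = set0 \/ G (x0, c0)).
have [A [[admA A0_or_seed] maxA]] : exists A, seeded A /\ forall B, A `<` B -> ~ seeded B.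
  apply: Zorn_bigcup => F Fseeded Ftot; split.
    by apply: admissible_bigcup => // G /Fseeded[].
  have [[G FG Gseed]|no_seed] := pselect (exists2 G, F G & G (x0, c0)).
    by right; exists G.
  left; apply/seteqP; split => // z [G FG Gz].
  have [_ [G0|Gseed]] := Fseeded _ FG; first by move: Gz; rewrite G0.
  by case: no_seed; exists G.
have Aseed : A (x0, c0).
  case: A0_or_seed => // A0; exfalso.
  have line_seed : range (fun t => (t *: x0, t * c0)) (x0, c0).
    by exists 1; rewrite ?scale1r ?mul1r.
  apply: (maxA (range (fun t => (t *: x0, t * c0)))).
    by rewrite A0; split => // /(_ _ line_seed).
  by split; [exact: admissible_line | right].
exists A; split => // v; apply: contrapT => v_notin.
have [G' admG' AG'] := admissible_graph_extension admA (ex_intro _ _ Aseed) v_notin.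
by apply: (maxA G' AG'); split => //; right; apply: AG'.1.
Qed.

Lemma ext_seminorm_dominated_extension x0 c0 : (`|c0|%:E <= p x0)%E ->
  exists g : V -> R,
    [/\ linear_functional g, forall v, (`|g v|%:E <= p v)%E & g x0 = c0].
Proof.
move=> /exists_total_admissible_graph[G [[linG funG domG] Gseed /choice[g Gg]]].
exists g; split.
- by move=> a u w; apply: funG (Gg _) (linG a (u, g u) (w, g w) (Gg u) (Gg w)).
- by move=> v; exact: domG (Gg v).
- exact: funG (Gg x0) Gseed.
Qed.

End DominatedExtension.

Section ElcTopology.
Variables (K : numFieldType) (X : lmodType K) (I : Type) (rho : I -> X -> \bar K).

Lemma elc_hausdorff_seminorm_neq0 x :
  elc_hausdorff rho -> x <> 0 -> exists i, rho i x <> 0%E.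
Proof.
move=> hausdorff x_neq0; apply: contrapT => rho_x0.
have [U [W [_ W_open Ux W0 UW_disj]]] := hausdorff x 0 x_neq0.
have [J [eps [eps_gt0 nbhd_sub]]] := W_open 0 W0.
apply: (UW_disj x); split => //; apply: nbhd_sub => i _.
rewrite subr0 (_ : rho i x = 0%E) ?lte_fin //.
by apply: contrapT => rho_ix; apply: rho_x0; exists i.
Qed.

Lemma elc_continuous_of_bound (f : X -> K) (i : I) (C : K) :
  linear_functional f -> 0 < C ->
  (forall v eps, 0 < eps -> (rho i v < eps%:E)%E -> `|f v| < C * eps) ->
  elc_continuous rho f.
Proof.
move=> f_lin C_gt0 f_bound W W_open x1 Wfx1.
have [e [e_gt0 ball_sub]] := W_open _ Wfx1.
exists [:: i], (e / C); split => [|y y_near]; first by rewrite divr_gt0.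
apply: ball_sub; have -> : f y - f x1 = f (y - x1).
  by rewrite linear_functionalB.
rewrite -[e](divfK (lt0r_neq0 C_gt0)) mulrC.
by apply: f_bound; [rewrite divr_gt0 | apply: y_near; left].
Qed.

End ElcTopology.

Lemma cor3p10_real (R : realType) : cor3p10_over R.
Proof.
move=> X I rho rho_sn hausdorff x x_neq0.
have [i /(ext_seminorm_gt0 (rho_sn i))] := elc_hausdorff_seminorm_neq0 hausdorff x_neq0.
move=> /ereal_gt0_lower_pos[c c_gt0 c_le].
have [|g [g_lin g_dom gx]] := ext_seminorm_dominated_extension (rho_sn i) (x0 := x) (c0 := c).
  by rewrite gtr0_norm.
exists g; split => //; last by rewrite gx; exact/eqP/lt0r_neq0.
apply: (elc_continuous_of_bound (i := i) (C := 1)) => // v eps _ rho_v.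
by rewrite mul1r -lte_fin; exact: le_lt_trans (g_dom v) rho_v.
Qed.

Local Open Scope complex_scope.

Definition realification {R : rcfType} (X : lmodType R[i]) : Type := X.

Section Realification.
Variables (R : rcfType) (X : lmodType R[i]).

HB.instance Definition _ := GRing.Zmodule.on (realification X).

Definition real_scale (r : R) (v : realification X) : realification X := r%:C *: (v : X).

Fact real_scaleA a b v : real_scale a (real_scale b v) = real_scale (a * b) v.
Proof. by rewrite /real_scale scalerA rmorphM. Qed.

Fact real_scale1 : left_id 1 real_scale.
Proof. by move=> v; rewrite /real_scale rmorph1 scale1r. Qed.

Fact real_scaleDr : right_distributive real_scale +%R.
Proof. by move=> a u v; rewrite /real_scale scalerDr. Qed.

Fact real_scaleDl v : {morph real_scale^~ v : a b / a + b}.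
Proof. by move=> a b; rewrite /real_scale rmorphD scalerDl. Qed.

HB.instance Definition _ := GRing.Zmodule_isLmodule.Build R (realification X)
  real_scaleA real_scale1 real_scaleDr real_scaleDl.

Lemma realificationZ (r : R) (v : realification X) : r *: v = r%:C *: (v : X).
Proof. by []. Qed.

End Realification.

Section ExtendedRealPart.
Variable R : rcfType.
Implicit Types z w : \bar R[i].

Lemma le_er_map_Re : {homo er_map (@complex.Re R) : z w / (z <= w)%E}.
Proof.
move=> [a| |] [b| |] //=; rewrite ?leey ?leNye // !lee_fin.
by rewrite lecE => /andP[_].
Qed.

Lemma lt_er_map_Re : {homo er_map (@complex.Re R) : z w / (z < w)%E}.
Proof.
move=> [a| |] [b| |] //=; rewrite ?ltey ?ltNye // !lte_fin.
by rewrite ltcE => /andP[_].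
Qed.

Lemma er_map_ReD z w :
  er_map (@complex.Re R) (z + w)%E = (er_map (@complex.Re R) z + er_map (@complex.Re R) w)%E.
Proof. by case: z w => [[a1 a2]| |] [[b1 b2]| |]. Qed.

Lemma er_map_ReZ (r : R) z : 0 <= r ->
  er_map (@complex.Re R) ((r%:C)%:E * z)%E = (r%:E * er_map (@complex.Re R) z)%E.
Proof.
rewrite le_eqVlt => /orP[/eqP <-|r_gt0]; first by rewrite !mul0e.
have rC_gt0 : 0 < r%:C by rewrite ltcR.
case: z => [[a b]| |]; last 2 first.
- by rewrite /mule /= !gt_eqF // !lte_fin rC_gt0 r_gt0.
- by rewrite /mule /= !gt_eqF // !lte_fin rC_gt0 r_gt0.
by rewrite /= mul0r subr0.
Qed.

End ExtendedRealPart.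

Lemma normc_real (R : rcfType) (r : R) : `|r%:C| = `|r|%:C.
Proof. by rewrite normc_def /= expr0n addr0 sqrtr_sqr. Qed.

Lemma normc_i (R : rcfType) : `|'i : R[i]| = 1.
Proof. by rewrite normc_def /= expr0n add0r expr1n sqrtr1. Qed.

Section ComplexToReal.
Variables (R : rcfType) (X : lmodType R[i]).

Lemma ext_seminorm_realification (rho : X -> \bar R[i]) : ext_seminorm rho ->
  ext_seminorm (fun v : realification X => er_map (@complex.Re R) (rho v)).
Proof.
case=> rho_ge0 rhoZ rhoD; split.
- by move=> v; exact: (le_er_map_Re (rho_ge0 v)).
- by move=> r v; rewrite realificationZ rhoZ normc_real er_map_ReZ.
- by move=> u v; rewrite -er_map_ReD; exact: le_er_map_Re.
Qed.

Variable g : realification X -> R.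
Hypothesis g_lin : linear_functional g.

Definition complexification (v : X) : R[i] := (g v)%:C - 'i * (g ('i *: v))%:C.

Lemma complexification_Re v : complex.Re (complexification v) = g v.
Proof. by rewrite /= !mul0r mul1r !subr0. Qed.

Lemma realification_decomp (b : R[i]) (u : X) :
  b *: u = complex.Re b *: (u : realification X) + complex.Im b *: ('i *: u : realification X).
Proof.
by rewrite !realificationZ scalerA {1}[b]complexE scalerDl [_ * 'i]mulrC.
Qed.

Lemma linear_complexification : linear_functional complexification.
Proof.
have gZ (b : R[i]) (u : X) : g (b *: u : X) = complex.Re b * g u + complex.Im b * g ('i *: u).
  by rewrite realification_decomp linear_functionalD // !linear_functionalZ.
move=> a u v; rewrite /complexification scalerDr scalerA.
rewrite !(linear_functionalD g_lin) (gZ a u) (gZ ('i * a) u).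
move: (g u) (g ('i *: u)) (g v) (g ('i *: v)) => gu giu gv giv.
by case: a => a1 a2; apply/eqP; rewrite eq_complex /=; apply/andP; split; apply/eqP; ring.
Qed.

Lemma norm_complexification_le v :
  `|complexification v| <= (`|g v| + `|g ('i *: v)|)%:C.
Proof.
apply: le_trans (ler_normB _ _) _.
by rewrite normrM normc_i mul1r !normc_real rmorphD.
Qed.

Lemma elc_continuous_complexification (I : Type) (rho : I -> X -> \bar R[i]) i :
  ext_seminorm (rho i) ->
  (forall v, (`|g v|%:E <= er_map (@complex.Re R) (rho i v))%E) ->
  elc_continuous rho complexification.
Proof.
move=> [_ rhoZ _] g_dom.
apply: (elc_continuous_of_bound (i := i) (C := 2)).
- exact: linear_complexification.
- by rewrite ltr0n.
move=> v eps eps_gt0 rho_v.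
have /lt_er_map_Re rho_v_Re := rho_v.
have gv_lt : `|g v| < complex.Re eps.
  by rewrite -lte_fin; exact: le_lt_trans (g_dom v) rho_v_Re.
have giv_lt : `|g ('i *: v)| < complex.Re eps.
  by rewrite -lte_fin; apply: le_lt_trans (g_dom _) _; rewrite rhoZ normc_i mul1e.
apply: le_lt_trans (norm_complexification_le v) _.
rewrite -[eps](RRe_real (gtr0_real eps_gt0)) -(rmorph_nat (real_complex R)) -rmorphM ltcR.
by rewrite mulr2n mulrDl mul1r ltrD.
Qed.

End ComplexToReal.

Lemma cor3p10_complex (R : realType) : cor3p10_over R[i].
Proof.
move=> X I rho rho_sn hausdorff x x_neq0.
have [i rho_ix] := elc_hausdorff_seminorm_neq0 hausdorff x_neq0.
have p_sn := ext_seminorm_realification (rho_sn i).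
have /ereal_gt0_lower_pos[c c_gt0 c_le] : (0 < er_map (@complex.Re R) (rho i x))%E.
  exact: lt_er_map_Re (ext_seminorm_gt0 (rho_sn i) rho_ix).
have [|g [g_lin g_dom gx]] := ext_seminorm_dominated_extension p_sn (x0 := x) (c0 := c).
  by rewrite gtr0_norm.
exists (complexification g); split.
- exact: linear_complexification.
- exact: elc_continuous_complexification (rho_sn i) g_dom.
- by move/(congr1 (@complex.Re R)); rewrite complexification_Re gx; exact/eqP/lt0r_neq0.
Qed.

Theorem corollary3p10 :
  (forall R : realType, cor3p10_over R) /\
  (forall R : realType, cor3p10_over R[i]).
Proof. by split; [exact: cor3p10_real | exact: cor3p10_complex]. Qed.
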